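(* Let $q$ be an odd prime power, $\omega$ a non-square in $\mathbb F_q$, $\epsilon\in\mathbb F_{q^2}$ with $\epsilon^2=\omega$, and write $z=z_1+\epsilon z_2$ ($z_i\in\mathbb F_q$) for $z\in\mathbb F_{q^2}$. Let $\mathcal C: aX^2+bXY+cXZ+dYZ+eZ^2=0$ be a non-singular conic of $\mathrm{PG}(2,q^2)$ with $d=1$ and $b\notin\mathbb F_q$. Put $A=-a_2b_1+a_1b_2$, $B=b_2c_1-b_1c_2-a_2d_1+a_1d_2$, $C=-c_2d_1+c_1d_2+b_2e_1-b_1e_2$, $D=d_2e_1-d_1e_2$, and let $\mathcal S\subset\mathrm{PG}(3,q)$ be the cubic surface in coordinates $(t_1:t_2:X:Z)$ with equation $$2t_1t_2(b_1X+d_1Z)-(t_1^2+\omega t_2^2)(b_2X+d_2Z)+AX^3+BX^2Z+CXZ^2+DZ^3=0.$$ Let $n_0$ and $n_\infty$ be the numbers of points of $\mathrm{PG}(3,q)$ on $\mathcal S$ with $t_1=t_2=0$ and with $X=Z=0$, respectively. Then $n_\infty=q+1$ and $n_0\in\{0,1,2,3\}$. *)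

From HB Require Import structures.
From mathcomp Require Import all_boot all_order all_algebra.
Set Implicit Arguments. Unset Strict Implicit. Unset Printing Implicit Defensive.
Import Order.TTheory GRing.Theory Num.Theory.
Local Open Scope ring_scope.

(* F plays F_q, K plays F_{q^2}; iota : F -> K is the embedding, and
   z1 + eps z2 is written emb iota eps z1 z2. *)
Definition emb (F K : finFieldType) (iota : {rmorphism F -> K}) (eps : K)
  (z1 z2 : F) : K := iota z1 + eps * iota z2.

(* Symmetric matrix of the conic aX^2+bXY+cXZ+dYZ+eZ^2 (odd characteristic). *)
Definition conic_mx (K : fieldType) (a b c d e : K) : 'M[K]_3 :=
  \matrix_(i < 3, j < 3)
    nth 0 (nth [::] [:: [:: a; b / 2%:R; c / 2%:R];
                       [:: b / 2%:R; 0; d / 2%:R];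
                       [:: c / 2%:R; d / 2%:R; e]] i) j.

Definition nonsingular_conic (K : fieldType) (a b c d e : K) : Prop :=
  \det (conic_mx a b c d e) != 0.

Definition coefA (F : fieldType) (a1 a2 b1 b2 c1 c2 d1 d2 e1 e2 : F) : F :=
  - a2 * b1 + a1 * b2.
Definition coefB (F : fieldType) (a1 a2 b1 b2 c1 c2 d1 d2 e1 e2 : F) : F :=
  b2 * c1 - b1 * c2 - a2 * d1 + a1 * d2.
Definition coefC (F : fieldType) (a1 a2 b1 b2 c1 c2 d1 d2 e1 e2 : F) : F :=
  - c2 * d1 + c1 * d2 + b2 * e1 - b1 * e2.
Definition coefD (F : fieldType) (a1 a2 b1 b2 c1 c2 d1 d2 e1 e2 : F) : F :=
  d2 * e1 - d1 * e2.

Definition cubicS (F : fieldType) (w a1 a2 b1 b2 c1 c2 d1 d2 e1 e2 : F)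
  (p : F * F * F * F) : F :=
  let: (t1, t2, X, Z) := p in
  2%:R * t1 * t2 * (b1 * X + d1 * Z)
  - (t1 ^+ 2 + w * t2 ^+ 2) * (b2 * X + d2 * Z)
  + coefA a1 a2 b1 b2 c1 c2 d1 d2 e1 e2 * X ^+ 3
  + coefB a1 a2 b1 b2 c1 c2 d1 d2 e1 e2 * X ^+ 2 * Z
  + coefC a1 a2 b1 b2 c1 c2 d1 d2 e1 e2 * X * Z ^+ 2
  + coefD a1 a2 b1 b2 c1 c2 d1 d2 e1 e2 * Z ^+ 3.

(* Number of points of PG(3,q) whose (nonzero) coordinate vectors satisfy the
   scalar-invariant predicate P: nonzero solutions divided by q - 1. *)
Definition nProjPoints (F : finFieldType) (P : pred (F * F * F * F)) : nat :=
  (#|[set p : F * F * F * F | (p != (0%R : F, 0%R : F, 0%R : F, 0%R : F)) && P p]| %/ (#|F|).-1)%N.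

Definition n_zero (F : finFieldType) (w a1 a2 b1 b2 c1 c2 d1 d2 e1 e2 : F) : nat :=
  nProjPoints (fun p => let: (t1, t2, X, Z) := p in (
    [&& t1 == 0, t2 == 0 & cubicS w a1 a2 b1 b2 c1 c2 d1 d2 e1 e2 p == 0])%R).

Definition n_infty (F : finFieldType) (w a1 a2 b1 b2 c1 c2 d1 d2 e1 e2 : F) : nat :=
  nProjPoints (fun p => let: (t1, t2, X, Z) := p in (
    [&& X == 0, Z == 0 & cubicS w a1 a2 b1 b2 c1 c2 d1 d2 e1 e2 p == 0])%R).

From Pilot Require Import Defs.
From mathcomp Require Import all_boot all_order all_algebra.
From mathcomp Require Import finfield ring zify.
Import GRing.Theory.
Local Open Scope ring_scope.

(* On the line X = Z = 0 of PG(3,q) every monomial of the cubic form of S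
   vanishes, so the whole line, q + 1 points, lies on S.  On the line
   t1 = t2 = 0 the surface cuts out the projective zeros of the binary cubic
   A X^3 + B X^2 Z + C X Z^2 + D Z^3, of which there are at most three unless
   A = B = C = D = 0.  Solving A = B = C = D = 0 for a and c (possible since
   b2 <> 0) makes the discriminant b c - a - b^2 e of the conic with d = 1
   vanish, contradicting non-singularity. *)

Lemma two_neq0_odd_card (F : finFieldType) : odd #|F| -> (2%:R : F) != 0.
Proof.
apply: contraL => /eqP two0.
have ch2 : (2 \in [pchar F])%N by rewrite inE two0 eqxx.
(* pPrimeCharType ch2 is F itself, seen as an F_2-vector space. *)
move: (finNzRing_gt1 F); rewrite -[#|F|]/#|pPrimeCharType ch2| card_pprimeChar.
by case: logn => // n; rewrite expnS oddM.
Qed.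

Lemma det_conic_mx (K : fieldType) (a b c d e : K) : (2%:R : K) != 0 ->
  \det (conic_mx a b c d e) = (b * c * d - a * d ^+ 2 - b ^+ 2 * e) / 4%:R.
Proof.
move=> two_neq0.
rewrite (expand_det_row _ ord0) !big_ord_recl big_ord0 /cofactor.
rewrite !(expand_det_row _ ord0) !big_ord_recl big_ord0 /cofactor.
rewrite !det_mx11 !mxE !big_ord0 /bump /=.
by field; rewrite two_neq0 (natrM K 2 2) mulf_neq0.
Qed.

Lemma emb_x0 (F K : finFieldType) (iota : {rmorphism F -> K}) (eps : K) (x : F) :
  emb iota eps x 0 = iota x.
Proof. by rewrite /emb rmorph0 mulr0 addr0. Qed.

Lemma nonsingular_conic_cubic_neq0 (F K : finFieldType)
    (iota : {rmorphism F -> K}) (eps : K) (a1 a2 b1 b2 c1 c2 e1 e2 : F) :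
    (2%:R : K) != 0 -> b2 != 0 ->
    nonsingular_conic (emb iota eps a1 a2) (emb iota eps b1 b2)
      (emb iota eps c1 c2) (emb iota eps 1 0) (emb iota eps e1 e2) ->
  ~~ [&& Defs.coefA a1 a2 b1 b2 c1 c2 1 0 e1 e2 == 0,
         Defs.coefB a1 a2 b1 b2 c1 c2 1 0 e1 e2 == 0,
         Defs.coefC a1 a2 b1 b2 c1 c2 1 0 e1 e2 == 0 &
         Defs.coefD a1 a2 b1 b2 c1 c2 1 0 e1 e2 == 0].
Proof.
move=> two_neq0 b2_neq0; apply: contraL.
move=> /and4P[/eqP A0 /eqP B0 /eqP C0 /eqP D0].
have e2E : e2 = 0 by rewrite -oppr0 -D0 /Defs.coefD; ring.
have c2E : c2 = b2 * e1 by rewrite -[c2]addr0 -C0 /Defs.coefC e2E; ring.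
have a2E : a2 = b2 * c1 - b1 * c2 by rewrite -[a2]addr0 -B0 /Defs.coefB; ring.
have a1E : a1 = b1 * c1 - b1 ^+ 2 * e1.
  by apply: (mulIf b2_neq0); rewrite -[a1 * b2]subr0 -A0 /Defs.coefA a2E c2E; ring.
rewrite negbK det_conic_mx // emb_x0 rmorph1 /emb a1E a2E c2E e2E.
by rewrite !(rmorphB, rmorphM, rmorphXn, rmorph0); apply/eqP; ring.
Qed.

Definition binary_cubic {R : nzRingType} (A B C D : R) (u : R * R) : R :=
  A * u.1 ^+ 3 + B * u.1 ^+ 2 * u.2 + C * u.1 * u.2 ^+ 2 + D * u.2 ^+ 3.

Lemma binary_cubic_dehomog (F : fieldType) (A B C D X Z : F) : Z != 0 ->
  binary_cubic A B C D (X, Z) = Z ^+ 3 * (Poly [:: D; C; B; A]).[X / Z].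
Proof. by move=> Z_neq0; rewrite horner_Poly /= /binary_cubic /=; field. Qed.

Lemma card_roots_cubic (F : finFieldType) (A B C D : F) :
    ~~ [&& A == 0, B == 0, C == 0 & D == 0] ->
  (#|[set x | root (Poly [:: D; C; B; A]) x]| + (A == 0%R) <= 3)%N.
Proof.
set g := Poly _ => ABCD_neq0.
have g_neq0 : g != 0.
  apply: contra ABCD_neq0 => /eqP g0.
  have coef_g i : g`_i = 0 by rewrite g0 coef0.
  move: (coef_g 0%N) (coef_g 1%N) (coef_g 2%N) (coef_g 3%N).
  by rewrite !coef_Poly /= => -> -> -> ->; rewrite eqxx.
have : (#|[set x | root g x]| < size g)%N.
  rewrite cardE; apply: max_poly_roots g_neq0 _ (enum_uniq _).
  by apply/allP => x; rewrite mem_enum inE.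
have [A0|_] := eqVneq A 0; last by have : (size g <= 4)%N := size_Poly _; lia.
have : (size g <= 3)%N.
  by apply/leq_sizeP => -[|[|[|[|j]]]] //= _; rewrite coef_Poly /= ?A0 ?nth_nil.
lia.
Qed.

Lemma card_binary_cubic_zeros (F : finFieldType) (A B C D : F) :
    ~~ [&& A == 0, B == 0, C == 0 & D == 0] ->
  (#|[set u : F * F | (u != (0%R, 0%R)) && (binary_cubic A B C D u == 0%R)]|
     <= 3 * #|F|.-1)%N.
Proof.
(* A zero (X, Z) with Z != 0 is (x Z, Z) for a root x of the dehomogenised
   cubic; zeros with Z = 0 exist only if A = 0. *)
move=> /card_roots_cubic; set roots := [set x | _] => card_roots.
set zeros := [set u | _]; pose nz := [set~ 0 : F].
have zeros_sub : zeros \subset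
    (fun p => (p.1 * p.2, p.2)) @: setX roots nz :|: [set (x, 0) | x in nz & A == 0].
  apply/subsetP => -[X Z]; rewrite !inE /= => /andP[XZ_neq0 /eqP XZ0].
  have [Z0|Z_neq0] := eqVneq Z 0.
    have X_neq0 : X != 0 by apply: contra XZ_neq0 => /eqP->; rewrite Z0.
    apply/orP; right; apply/imsetP; exists X; last by rewrite Z0.
    rewrite !inE X_neq0 /=; move: XZ0; rewrite Z0 /binary_cubic /= !expr0n /=.
    rewrite !mulr0 !addr0 => /eqP; rewrite mulf_eq0 expf_eq0 (negbTE X_neq0).
    by rewrite andbF orbF.
  apply/orP; left; apply/imsetP; exists (X / Z, Z); last by rewrite /= divfK.
  rewrite !inE /= Z_neq0 andbT /root.
  by move: XZ0; rewrite binary_cubic_dehomog // => /eqP; rewrite mulf_eq0 expf_eq0 (negbTE Z_neq0).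
apply: leq_trans (subset_leq_card zeros_sub) _.
apply: leq_trans (leq_card_setU _ _) _.
apply: leq_trans (leq_add (leq_imset_card _ _) (leq_imset_card _ _)) _.
rewrite cardsX cardsC1.
have -> : #|[set x in nz | A == 0%R]| = ((A == 0%R) * #|F|.-1)%N.
  case: eqP => _; [rewrite mul1n | rewrite mul0n]; last first.
    by apply/eqP; rewrite cards_eq0; apply/eqP/setP => x; rewrite !inE andbF.
  by rewrite -(cardsC1 (0 : F)); apply: eq_card => x; rewrite !inE andbT.
by rewrite -mulnDl leq_mul2r card_roots orbT.
Qed.

Section PointsOnLines.

Variables (F : finFieldType) (w a1 a2 b1 b2 c1 c2 d1 d2 e1 e2 : F).

Local Notation cubicS := (cubicS w a1 a2 b1 b2 c1 c2 d1 d2 e1 e2).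
Local Arguments Defs.cubicS : simpl never.

Lemma cubicS_XZ0 (t1 t2 : F) : cubicS (t1, t2, 0, 0) = 0.
Proof. by rewrite /cubicS; ring. Qed.

Lemma cubicS_t0 (X Z : F) :
  cubicS (0, 0, X, Z) =
  binary_cubic (Defs.coefA a1 a2 b1 b2 c1 c2 d1 d2 e1 e2)
    (Defs.coefB a1 a2 b1 b2 c1 c2 d1 d2 e1 e2)
    (Defs.coefC a1 a2 b1 b2 c1 c2 d1 d2 e1 e2)
    (Defs.coefD a1 a2 b1 b2 c1 c2 d1 d2 e1 e2) (X, Z).
Proof. by rewrite /cubicS /binary_cubic /=; ring. Qed.

Lemma n_infty_card : n_infty w a1 a2 b1 b2 c1 c2 d1 d2 e1 e2 = #|F|.+1.
Proof.
rewrite /n_infty /nProjPoints; set S := [set p | _].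
have -> : S = (fun u : F * F => (u.1, u.2, 0, 0)) @: [set~ (0, 0)].
  apply/setP => -[[[t1 t2] X] Z]; rewrite !inE /=; apply/idP/imsetP.
  - case/andP=> p_neq0 /and3P[/eqP X0 /eqP Z0 _]; exists (t1, t2); last by rewrite X0 Z0.
    by rewrite !inE; apply: contra p_neq0 => /eqP[-> ->]; rewrite X0 Z0.
  - case=> -[u1 u2]; rewrite !inE => u_neq0 [-> -> -> ->].
    rewrite cubicS_XZ0 !eqxx !andbT; apply: contra u_neq0 => /eqP[-> ->] //.
rewrite card_imset; last by move=> [? ?] [? ?] [-> ->].
have q_gt1 := finNzRing_gt1 F.
rewrite cardsC1 card_prod.
have -> : (#|F| * #|F|).-1 = (#|F|.+1 * #|F|.-1)%N.
  by case: #|F| q_gt1 => [|q] // _; nia.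
by rewrite mulnK // -subn1 subn_gt0.
Qed.

Lemma n_zero_le3 :
    ~~ [&& Defs.coefA a1 a2 b1 b2 c1 c2 d1 d2 e1 e2 == 0,
           Defs.coefB a1 a2 b1 b2 c1 c2 d1 d2 e1 e2 == 0,
           Defs.coefC a1 a2 b1 b2 c1 c2 d1 d2 e1 e2 == 0 &
           Defs.coefD a1 a2 b1 b2 c1 c2 d1 d2 e1 e2 == 0] ->
  (n_zero w a1 a2 b1 b2 c1 c2 d1 d2 e1 e2 <= 3)%N.
Proof.
move=> /card_binary_cubic_zeros; set Zs := [set u | _] => card_Zs.
rewrite /n_zero /nProjPoints; set S := [set p | _].
have -> : S = (fun u : F * F => (0, 0, u.1, u.2)) @: Zs.
  apply/setP => -[[[t1 t2] X] Z]; rewrite !inE; apply/idP/imsetP.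
  - case/andP=> p_neq0 /and3P[/eqP t1_0 /eqP t2_0 p_on_S].
    exists (X, Z); last by rewrite t1_0 t2_0.
    move: p_on_S; rewrite !inE t1_0 t2_0 cubicS_t0 => ->; rewrite andbT.
    by apply: contra p_neq0 => /eqP[-> ->]; rewrite t1_0 t2_0.
  - case=> -[u1 u2]; rewrite !inE /= => /andP[u_neq0 u_on_S] [-> -> -> ->].
    rewrite cubicS_t0 u_on_S !eqxx !andbT; apply: contra u_neq0 => /eqP[-> ->] //.
rewrite card_imset; last by move=> [? ?] [? ?] [-> ->].
have q'_gt0 : (0 < #|F|.-1)%N by rewrite -subn1 subn_gt0 finNzRing_gt1.
by rewrite -ltnS ltn_divLR // (leq_ltn_trans card_Zs) // ltn_mul2r q'_gt0.
Qed.

End PointsOnLines.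

Theorem mainTheorem8 (F K : finFieldType) (iota : {rmorphism F -> K})
  (hodd : odd #|F|) (hK : #|K| = (#|F| ^ 2)%N)
  (w : F) (hw : forall x : F, x ^+ 2 != w)
  (eps : K) (heps : eps ^+ 2 = iota w)
  (a1 a2 b1 b2 c1 c2 e1 e2 : F) :
  nonsingular_conic (emb iota eps a1 a2) (emb iota eps b1 b2)
    (emb iota eps c1 c2) (emb iota eps 1 0) (emb iota eps e1 e2) ->
  (forall x : F, iota x != emb iota eps b1 b2) ->
  n_infty w a1 a2 b1 b2 c1 c2 1 0 e1 e2 = (#|F|).+1 /\
  n_zero w a1 a2 b1 b2 c1 c2 1 0 e1 e2 \in [:: 0%N; 1%N; 2%N; 3%N].
Proof.
move=> conic_ns b_notin_F; split; first exact: n_infty_card.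
have two_neq0 : (2%:R : K) != 0.
  by rewrite -(rmorph_nat iota) fmorph_eq0 two_neq0_odd_card.
have b2_neq0 : b2 != 0.
  by apply: contraTneq (b_notin_F b1) => ->; rewrite emb_x0 eqxx.
have : (n_zero w a1 a2 b1 b2 c1 c2 1%R 0%R e1 e2 <= 3)%N.
  by apply: n_zero_le3; exact: nonsingular_conic_cubic_neq0 conic_ns.
by case: n_zero => [|[|[|[|]]]].
Qed.
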